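(* Let $(q_n)$ be the Fibonacci Quilt sequence. For all integers $k\ge0$ and $\ell\ge1+5k$ (and $\ell\ge6$ when $k\ge1$), \[ q_\ell+q_{\ell-5}+q_{\ell-10}+\cdots+q_{\ell-5k}<q_{\ell+1}. \]
   Context: Given an increasing sequence of positive integers $(q_i)_{i\ge1}$, an FQ-legal decomposition of an integer $m\ge0$ is an expression $m=q_{\ell_1}+q_{\ell_2}+\cdots+q_{\ell_t}$ ($t\ge0$, the empty sum representing $0$) with distinct indices $\ell_1>\ell_2>\cdots>\ell_t$ such that $|\ell_i-\ell_j|\notin\{1,3,4\}$ for all $i,j$, and $\{1,3\}\not\subset\{\ell_1,\dots,\ell_t\}$. The Fibonacci Quilt sequence is the increasing sequence of positive integers $(q_i)_{i\ge1}$ in which each $q_i$ is the smallest positive integer having no FQ-legal decomposition using only $q_1,\dots,q_{i-1}$. Its first terms are $1,2,3,4,5,7,9,12,16,21,28,37,49,\dots$. *)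

From mathcomp Require Import all_boot.
Set Implicit Arguments. Unset Strict Implicit. Unset Printing Implicit Defensive.

(* An index set s (a list of indices; order irrelevant) is FQ-legal if its
   indices are distinct, no two differ by 1, 3 or 4, and it does not contain
   both 1 and 3.  (Checking a - b over all ordered pairs with truncated
   subtraction covers |a - b|.) *)
Definition FQ_legal (s : seq nat) : bool :=
  [&& uniq s,
      all (fun a => all (fun b => (a - b) \notin [:: 1; 3; 4]) s) s
    & ~~ ((1 \in s) && (3 \in s))].

Fixpoint subsets (s : seq nat) : seq (seq nat) :=
  match s with
  | [::] => [:: [::]]
  | x :: t => let r := subsets t in map (cons x) r ++ r
  end.

(* qs = [:: q_1; ...; q_(i-1)]; has_FQ_decomp qs m holds iff m has an
   FQ-legal decomposition using only q_1, ..., q_(i-1)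
   (index j refers to q_j = nth 0 qs j.-1). *)
Definition has_FQ_decomp (qs : seq nat) (m : nat) : bool :=
  has (fun s => FQ_legal s && (sumn (map (fun j => nth 0 qs j.-1) s) == m))
      (subsets (iota 1 (size qs))).

(* The smallest positive integer with no FQ-legal decomposition using qs.
   The search range 1 .. (sumn qs).+1 suffices: (sumn qs).+1 exceeds every
   decomposition sum, so it is never decomposable. *)
Definition FQ_next (qs : seq nat) : nat :=
  let S := sumn qs in
  nth S.+1 [seq m <- iota 1 S.+1 | ~~ has_FQ_decomp qs m] 0.

Fixpoint FQ_prefix (n : nat) : seq nat :=
  match n with
  | 0 => [::]
  | n'.+1 => let p := FQ_prefix n' in rcons p (FQ_next p)
  end.

(* The Fibonacci Quilt sequence, 1-indexed: fq i = q_i for i >= 1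
   (fq 0 = 0 is an unused dummy value). *)
Definition fq (i : nat) : nat := last 0 (FQ_prefix i).

Lemma fq_first_terms :
  map fq (iota 1 13) = [:: 1; 2; 3; 4; 5; 7; 9; 12; 16; 21; 28; 37; 49].
Proof. by vm_compute. Qed.

From mathcomp Require Import all_boot zify.

Set Implicit Arguments.
Unset Strict Implicit.
Unset Printing Implicit Defensive.

(* By construction, q_(n+1) is the least positive integer without a legal
   decomposition into q_1, ..., q_n.  This alone makes q strictly increasing,
   and yields q_n = q_(n-2) + q_(n-3) for n >= 5 by strong induction: if the
   recurrence holds up to N, then every 0 < m < T := q_(N-1) + q_(N-2)
   = q_N + q_(N-4) is decomposable with indices <= N (use q_N together with
   a decomposition of m - q_N with indices <= N-5), whereas T is not, since a
   legal sum with indices <= j stays below q_(j+1) + q_j.  Hence q_(N+1) = T.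
   The recurrence gives q_(l+1) = q_l + q_(l-4), and the inequality follows by
   induction on k. *)

Lemma size_FQ_prefix n : size (FQ_prefix n) = n.
Proof. by elim: n => //= n IH; rewrite size_rcons IH. Qed.

Lemma fqS n : fq n.+1 = FQ_next (FQ_prefix n).
Proof. by rewrite /fq /= last_rcons. Qed.

Lemma nth_FQ_prefix n i : i < n -> nth 0 (FQ_prefix n) i = fq i.+1.
Proof.
elim: n => // n IH lt_in; rewrite /= nth_rcons size_FQ_prefix.
by case: (ltngtP i n) => [/IH | | ->] //; [lia | rewrite fqS].
Qed.

Lemma fq0 : fq 0 = 0.
Proof. by []. Qed.

Lemma subsets_subseq t s : s \in subsets t -> subseq s t.
Proof.
elim: t s => [|x t IH] s /=; first by rewrite inE => /eqP ->.
rewrite mem_cat => /orP [/mapP [s' /IH + ->] | /IH]; first by rewrite /= eqxx.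
by move=> sub_st; apply: subseq_trans sub_st (subseq_cons t x).
Qed.

Lemma filter_in_subsets (p : pred nat) t : filter p t \in subsets t.
Proof.
elim: t => [|x t IH] /=; first by rewrite inE.
by rewrite mem_cat; case: (p x); rewrite ?map_f ?IH ?orbT.
Qed.

Lemma sumn_subsets_le (f : nat -> nat) t s :
  s \in subsets t -> sumn (map f s) <= sumn (map f t).
Proof.
elim: t s => [|x t IH] s /=; first by rewrite inE => /eqP ->.
rewrite mem_cat => /orP [/mapP [s' /IH le_s' ->] | /IH le_s] /=.
  by rewrite leq_add2l.
exact: leq_trans le_s (leq_addl _ _).
Qed.

Lemma sumn_nth_iota (qs : seq nat) :
  sumn [seq nth 0 qs j.-1 | j <- iota 1 (size qs)] = sumn qs.
Proof.
rewrite -[1]/(1 + 0) iotaDl -map_comp.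
by rewrite (eq_map (_ : _ \o addn 1 =1 nth 0 qs)) // -/(mkseq _ _) mkseq_nth.
Qed.

Section FQNext.

Variable qs : seq nat.

Let undecomposable := [seq m <- iota 1 (sumn qs).+1 | ~~ has_FQ_decomp qs m].

Lemma has_FQ_decomp_le m : has_FQ_decomp qs m -> m <= sumn qs.
Proof.
case/hasP => s /(sumn_subsets_le (fun j => nth 0 qs j.-1)).
by rewrite sumn_nth_iota => le_s /andP [_ /eqP <-].
Qed.

Lemma FQ_next_undecomposable : ~~ has_FQ_decomp qs (FQ_next qs).
Proof.
rewrite /FQ_next -/undecomposable.
have [size_gt0 | size_le0] := ltnP 0 (size undecomposable).
  by have := mem_nth (sumn qs).+1 size_gt0; rewrite mem_filter => /andP [].
by rewrite nth_default //; apply/negP => /has_FQ_decomp_le; rewrite ltnn.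
Qed.

Lemma FQ_next_min m : 0 < m < FQ_next qs -> has_FQ_decomp qs m.
Proof.
case/andP => m_gt0 lt_m_next; apply/negPn/negP => undec_m.
(* [minn m (sumn qs).+1] is undecomposable and lies in the search range. *)
set m' := minn m (sumn qs).+1.
have m'_in : m' \in undecomposable.
  rewrite mem_filter mem_iota; apply/andP; split; last by rewrite /m'; lia.
  rewrite /m'; case: leqP => // _; apply/negP => /has_FQ_decomp_le; lia.
have sorted_undec : sorted leq undecomposable.
  exact/sorted_filter/iota_sorted/leq_trans.
have idx_m' : index m' undecomposable < size undecomposable by rewrite index_mem.
have := sorted_leq_nth leq_trans leqnn (sumn qs).+1 sorted_undec.
move=> /(_ 0 (index m' undecomposable)); rewrite !inE nth_index //.
move=> /(_ (leq_ltn_trans (leq0n _) idx_m') idx_m' (leq0n _)).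
by rewrite /FQ_next -/undecomposable /m' in lt_m_next *; lia.
Qed.

End FQNext.

Definition fq_sum (s : seq nat) : nat := sumn (map fq s).

Definition indices_le (n : nat) (s : seq nat) : Prop :=
  forall i, i \in s -> 0 < i <= n.

Definition decomposable (n m : nat) : Prop :=
  exists s, [/\ FQ_legal s, indices_le n s & fq_sum s = m].

Lemma FQ_legal_uniq s : FQ_legal s -> uniq s.
Proof. by case/and3P. Qed.

Lemma FQ_legal_gap s a b : FQ_legal s -> a \in s -> b \in s ->
  [/\ a - b != 1, a - b != 3 & a - b != 4].
Proof.
case/and3P => _ /allP gaps _ a_s b_s; move: (allP (gaps a a_s) b b_s).
by rewrite !inE; case/norP => -> /norP [-> ->].
Qed.

Lemma FQ_legal_sub s t : uniq t -> {subset t <= s} -> FQ_legal s -> FQ_legal t.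
Proof.
move=> uniq_t sub_ts /and3P [_ /allP gaps not13]; apply/and3P; split => //.
  apply/allP => a /sub_ts a_s; apply/allP => b /sub_ts b_s.
  exact: (allP (gaps a a_s) b b_s).
by apply: contra not13 => /andP [/sub_ts -> /sub_ts ->].
Qed.

Lemma FQ_legal_perm s t : perm_eq s t -> FQ_legal s -> FQ_legal t.
Proof.
move=> perm_st legal_s; apply: (FQ_legal_sub _ _ legal_s) => [|i].
  by rewrite -(perm_uniq perm_st) FQ_legal_uniq.
by rewrite (perm_mem perm_st).
Qed.

Lemma FQ_legal_rem j s : FQ_legal s -> FQ_legal (rem j s).
Proof.
move=> legal_s; apply: (FQ_legal_sub _ _ legal_s); last exact: mem_rem.
by rewrite rem_uniq ?FQ_legal_uniq.
Qed.

Lemma FQ_legal_cons n s : FQ_legal s -> indices_le n s -> FQ_legal (n + 5 :: s).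
Proof.
move=> legal_s s_le; apply/and3P; split.
- by rewrite /= FQ_legal_uniq // andbT; apply/negP => /s_le; lia.
- apply/allP => a; rewrite inE => /predU1P [-> | a_s];
    apply/allP => b; rewrite inE => /predU1P [-> | b_s].
  + by rewrite subnn.
  + by have := s_le b b_s; rewrite !inE; lia.
  + by have := s_le a a_s; rewrite !inE; lia.
  + have [/negbTE g1 /negbTE g3 /negbTE g4] := FQ_legal_gap legal_s a_s b_s.
    by rewrite !inE g1 g3 g4.
- rewrite !inE; case/and3P: legal_s => _ _; apply: contra.
  by case/andP => /predU1P [? | ->] /predU1P [? | ->] //; lia.
Qed.

Lemma fq_sum_perm s t : perm_eq s t -> fq_sum s = fq_sum t.
Proof. by move=> perm_st; apply/perm_sumn/perm_map. Qed.

Lemma fq_sum_rem j s : j \in s -> fq_sum s = fq j + fq_sum (rem j s).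
Proof. by move=> j_s; rewrite (fq_sum_perm (perm_to_rem j_s)). Qed.

Lemma fq_prefix_sum n s : indices_le n s ->
  sumn [seq nth 0 (FQ_prefix n) j.-1 | j <- s] = fq_sum s.
Proof.
move=> s_le; congr sumn; apply/eq_in_map => j /s_le j_le.
by rewrite nth_FQ_prefix ?prednK //; lia.
Qed.

Lemma has_FQ_decompP n m :
  reflect (decomposable n m) (has_FQ_decomp (FQ_prefix n) m).
Proof.
rewrite /has_FQ_decomp size_FQ_prefix; apply: (iffP hasP).
  case=> s /subsets_subseq /mem_subseq sub_s /andP [legal_s /eqP sum_s].
  have s_le : indices_le n s by move=> i /sub_s; rewrite mem_iota; lia.
  by exists s; rewrite -(fq_prefix_sum s_le).
case=> s [legal_s s_le sum_s].
set t := [seq i <- iota 1 n | i \in s].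
have perm_st : perm_eq s t.
  apply: uniq_perm; rewrite ?filter_uniq ?iota_uniq ?FQ_legal_uniq // => i.
  by rewrite mem_filter mem_iota; apply/esym/andb_idr => /s_le; lia.
have t_le : indices_le n t by move=> i; rewrite -(perm_mem perm_st); apply: s_le.
exists t; first exact: filter_in_subsets.
apply/andP; split; first exact: FQ_legal_perm legal_s.
by rewrite fq_prefix_sum // -(fq_sum_perm perm_st) sum_s.
Qed.

Lemma fq_succ_undecomposable n : ~ decomposable n (fq n.+1).
Proof. by rewrite fqS => /has_FQ_decompP; apply/negP/FQ_next_undecomposable. Qed.

Lemma decomposable_lt_fq n m : 0 < m < fq n.+1 -> decomposable n m.
Proof. by rewrite fqS => /FQ_next_min /has_FQ_decompP. Qed.

Lemma decomposable0 n : decomposable n 0.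
Proof. by exists [::]. Qed.

Lemma decomposable_widen n n' m :
  n <= n' -> decomposable n m -> decomposable n' m.
Proof.
by move=> le_nn' [s [legal_s s_le sum_s]]; exists s; split=> // i /s_le; lia.
Qed.

Lemma decomposable_fq n : 0 < n -> decomposable n (fq n).
Proof.
move=> n_gt0; exists [:: n]; split; last by rewrite /fq_sum /= addn0.
  by rewrite /FQ_legal /= subnn !inE; apply/negP => /andP [/eqP <-].
by move=> i; rewrite inE => /eqP ->; lia.
Qed.

Lemma decomposable_le_fq n m : 0 < m <= fq n -> decomposable n m.
Proof.
case: n => [|n]; first by rewrite fq0; lia.
case/andP => m_gt0; rewrite leq_eqVlt => /predU1P [-> | lt_m_fq].
  exact: decomposable_fq.
by apply: (decomposable_widen (leqnSn n)); apply: decomposable_lt_fq; lia.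
Qed.

Lemma decomposable_add n m :
  decomposable n m -> decomposable (n + 5) (fq (n + 5) + m).
Proof.
case=> s [legal_s s_le sum_s]; exists (n + 5 :: s); split.
- exact: FQ_legal_cons.
- by move=> i; rewrite inE => /predU1P [-> | /s_le]; lia.
- by rewrite /fq_sum /= -sum_s.
Qed.

Lemma fq_succ_gt0 n : 0 < fq n.+1.
Proof.
rewrite lt0n; apply/eqP => fq_eq0; apply: (@fq_succ_undecomposable n).
by rewrite fq_eq0; apply: decomposable0.
Qed.

Lemma fq_ltS n : fq n < fq n.+1.
Proof.
rewrite ltnNge; apply/negP => le_fq.
apply: (@fq_succ_undecomposable n); apply: decomposable_le_fq.
by rewrite fq_succ_gt0.
Qed.

Lemma fq_lt : {homo fq : i j / i < j}.
Proof. exact: (homo_ltn ltn_trans fq_ltS). Qed.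

Lemma fq_le : {homo fq : i j / i <= j}.
Proof. exact: (homo_leq leqnn leq_trans (fun n => ltnW (fq_ltS n))). Qed.

Lemma fq_succ_eq n T : (forall m, 0 < m < T -> decomposable n m) ->
  ~ decomposable n T -> fq n.+1 = T.
Proof.
move=> below_T undec_T; case: (ltngtP (fq n.+1) T) => // [lt_fq_T | lt_T_fq].
  by case: (fq_succ_undecomposable (below_T _ _)); rewrite fq_succ_gt0.
case: T below_T undec_T lt_T_fq => [|T] _ undec_T lt_T_fq.
  by case: undec_T; apply: decomposable0.
by case: undec_T; apply: decomposable_lt_fq.
Qed.

Lemma indices_le_pred n s : indices_le n s -> n \notin s -> indices_le (n - 1) s.
Proof.
move=> s_le n_notin i i_s.
have i_neq : i != n by apply: contraNneq n_notin => <-.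
by have := s_le i i_s; lia.
Qed.

Lemma indices_rem_top j s : FQ_legal s -> j \in s -> indices_le j s ->
  forall i, i \in rem j s -> 0 < i /\ (i = j - 2 \/ i <= j - 5).
Proof.
move=> legal_s j_s s_le i; rewrite mem_rem_uniq ?FQ_legal_uniq // inE.
case/andP => i_neq i_s; have [g1 g3 g4] := FQ_legal_gap legal_s j_s i_s.
by have := s_le i i_s; lia.
Qed.

Lemma indices_rem_top5 j s : FQ_legal s -> j \in s -> indices_le j s ->
  j - 2 \notin rem j s -> indices_le (j - 5) (rem j s).
Proof.
move=> legal_s j_s s_le j2_notin i i_in.
have [i_gt0 [i_eq | le_i]] := indices_rem_top legal_s j_s s_le i_in; last lia.
by move: j2_notin; rewrite -i_eq i_in.
Qed.

Lemma indices_rem_top7 j s : FQ_legal s -> j \in s -> indices_le j s ->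
  j - 2 \in rem j s -> indices_le (j - 7) (rem (j - 2) (rem j s)).
Proof.
move=> legal_s j_s s_le j2_in i i_in.
have rest_le : indices_le (j - 2) (rem j s).
  by move=> i' /(indices_rem_top legal_s j_s s_le); lia.
have := indices_rem_top (FQ_legal_rem j legal_s) j2_in rest_le i_in.
have := indices_rem_top legal_s j_s s_le (mem_rem i_in).
have := rest_le _ j2_in; lia.
Qed.

Definition fq_rec_upto (N : nat) : Prop :=
  forall i, 5 <= i <= N -> fq i = fq (i - 2) + fq (i - 3).

Lemma fq_rec_upto7 : fq_rec_upto 7.
Proof.
move=> i le_i; have : [|| i == 5, i == 6 | i == 7] by lia.
by case/or3P => /eqP ->; vm_compute.
Qed.

Section Recurrence.

Variable N : nat.
Hypothesis fq_rec_N : fq_rec_upto N.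

(* The two bounds used in [fq_sum_lt] once the top index [j], resp. [j] and
   [j - 2], has been removed from the decomposition. *)
Lemma fq_tail5_le j : 0 < j < N -> fq (j - 5).+1 + fq (j - 5) <= fq j.+1.
Proof.
case/andP => j_gt0 lt_jN; case: (ltnP j 7) => [lt_j7 | le7j].
  have : j \in iota 1 6 by rewrite mem_iota; lia.
  by move: j {j_gt0 lt_jN lt_j7}; apply/allP; vm_compute.
have rec_j2 : fq (j - 2) = fq (j - 5).+1 + fq (j - 5).
  by rewrite fq_rec_N; try congr (fq _ + fq _); lia.
by have := @fq_le (j - 2) j.+1; lia.
Qed.

Lemma fq_tail7_le j : 3 <= j < N ->
  fq (j - 2) + fq (j - 7).+1 + fq (j - 7) <= fq j.+1.
Proof.
case/andP => le3j lt_jN; case: (ltnP j 9) => [lt_j9 | le9j].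
  have : j \in iota 3 6 by rewrite mem_iota; lia.
  by move: j {le3j lt_jN lt_j9}; apply/allP; vm_compute.
have rec_j4 : fq (j - 4) = fq (j - 7).+1 + fq (j - 7).
  by rewrite fq_rec_N; try congr (fq _ + fq _); lia.
have rec_jS : fq j.+1 = fq (j - 1) + fq (j - 2).
  by rewrite fq_rec_N; try congr (fq _ + fq _); lia.
by have := @fq_le (j - 4) (j - 1); lia.
Qed.

Lemma fq_sum_lt j s : j < N -> FQ_legal s -> indices_le j s ->
  fq_sum s < fq j.+1 + fq j.
Proof.
elim/ltn_ind: j s => j IH s lt_jN legal_s s_le.
case: (posnP j) => [j0 | j_gt0].
  case: s s_le {legal_s} => [_ | i s /(_ i (mem_head i s))]; last lia.
  by rewrite /fq_sum /= j0 fq0 addn0 fq_succ_gt0.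
case: (boolP (j \in s)) => [j_s | j_notin].
  rewrite (fq_sum_rem j_s); have legal_rest := FQ_legal_rem j legal_s.
  case: (boolP (j - 2 \in rem j s)) => [j2_in | j2_notin].
    have rest_le := indices_rem_top7 legal_s j_s s_le j2_in.
    have j2_gt0 := indices_rem_top legal_s j_s s_le j2_in.
    have := IH (j - 7) ltac:(lia) _ ltac:(lia) (FQ_legal_rem (j - 2) legal_rest).
    move=> /(_ rest_le).
    rewrite (fq_sum_rem j2_in); have := fq_tail7_le (j := j); lia.
  have := IH (j - 5) ltac:(lia) _ ltac:(lia) legal_rest.
  move=> /(_ (indices_rem_top5 legal_s j_s s_le j2_notin)).
  have := fq_tail5_le (j := j); lia.
have := IH (j - 1) ltac:(lia) _ ltac:(lia) legal_s.
move=> /(_ (indices_le_pred s_le j_notin)).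
have -> : (j - 1).+1 = j by lia.
by have := fq_ltS j; have := @fq_le (j - 1) j; lia.
Qed.

End Recurrence.

Section RecurrenceStep.

Variable N : nat.
Hypotheses (le7N : 7 <= N) (fq_rec_N : fq_rec_upto N).

Let fq_N4 : fq (N - 5).+1 = fq (N - 4).
Proof. by congr fq; lia. Qed.

Let rec_sum_eq : fq (N - 1) + fq (N - 2) = fq N + fq (N - 4).
Proof.
have rec_N1 : fq (N - 1) = fq (N - 3) + fq (N - 4).
  by rewrite fq_rec_N; try congr (fq _ + fq _); lia.
by rewrite rec_N1 (fq_rec_N (i := N)); lia.
Qed.

Lemma decomposable_lt_rec_sum m :
  0 < m < fq (N - 1) + fq (N - 2) -> decomposable N m.
Proof.
case/andP => m_gt0 lt_m; case: (leqP m (fq N)) => [le_m | lt_fqN_m].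
  by apply: decomposable_le_fq; rewrite m_gt0.
have : decomposable (N - 5) (m - fq N) by apply: decomposable_lt_fq; lia.
move/decomposable_add; have -> : N - 5 + 5 = N by lia.
by rewrite subnKC // ltnW.
Qed.

Lemma rec_sum_undecomposable : ~ decomposable N (fq (N - 1) + fq (N - 2)).
Proof.
case=> s [legal_s s_le sum_s].
case: (boolP (N \in s)) => [N_s | N_notin].
  have rest_sum : fq_sum (rem N s) = fq (N - 4).
    by move: sum_s; rewrite (fq_sum_rem N_s) rec_sum_eq; lia.
  case: (boolP (N - 2 \in rem N s)) => [N2_in | N2_notin].
    by have := @fq_lt (N - 4) (N - 2); rewrite -rest_sum (fq_sum_rem N2_in); lia.
  apply: (@fq_succ_undecomposable (N - 5)); rewrite fq_N4 -rest_sum.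
  exists (rem N s); split => //; first exact: FQ_legal_rem.
  exact: indices_rem_top5.
have s_le1 := indices_le_pred s_le N_notin.
case: (boolP (N - 1 \in s)) => [N1_s | N1_notin].
  apply: (@fq_succ_undecomposable (N - 3)); exists (rem (N - 1) s); split.
  - exact: FQ_legal_rem.
  - by move=> i /(indices_rem_top legal_s N1_s s_le1); lia.
  - by move: sum_s; rewrite (fq_sum_rem N1_s) (_ : (N - 3).+1 = N - 2); lia.
have s_le2 : indices_le (N - 2) s.
  by move=> i /(indices_le_pred s_le1 N1_notin); lia.
have := fq_sum_lt fq_rec_N (j := N - 2) _ legal_s s_le2.
by rewrite (_ : (N - 2).+1 = N - 1); lia.
Qed.

Lemma fq_rec_succ : fq N.+1 = fq (N - 1) + fq (N - 2).
Proof. exact: fq_succ_eq decomposable_lt_rec_sum rec_sum_undecomposable. Qed.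

End RecurrenceStep.

Lemma fq_rec_upto_all N : fq_rec_upto N.
Proof.
elim: N => [|N IH] i; first lia.
case: (ltnP N 7) => [lt_N7 le_i | le7N le_i]; first by apply: fq_rec_upto7; lia.
case: (ltnP i N.+1) => [lt_i | ge_i]; first by apply: IH; lia.
have -> : i = N.+1 by lia.
by rewrite (fq_rec_succ le7N IH); congr (fq _ + fq _); lia.
Qed.

Lemma fq_rec i : 5 <= i -> fq i = fq (i - 2) + fq (i - 3).
Proof. by move=> le5i; apply: (@fq_rec_upto_all i); lia. Qed.

Lemma fq_recS n : 6 <= n -> fq n.+1 = fq n + fq (n - 4).
Proof.
move=> le6n; have rec_n := fq_rec (i := n).
have rec_nS : fq n.+1 = fq (n - 1) + fq (n - 2).
  by rewrite fq_rec; try congr (fq _ + fq _); lia.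
have rec_n1 : fq (n - 1) = fq (n - 3) + fq (n - 4).
  by rewrite fq_rec; try congr (fq _ + fq _); lia.
lia.
Qed.

Theorem mainTheorem15 (k l : nat) :
  1 + 5 * k <= l -> (1 <= k -> 6 <= l) ->
  \sum_(0 <= i < k.+1) fq (l - 5 * i) < fq l.+1.
Proof.
elim: k l => [|k IH] l le_l le6l.
  by rewrite big_nat1 muln0 subn0 fq_ltS.
have {}le6l : 6 <= l by apply: le6l.
rewrite big_nat_recl // muln0 subn0 (fq_recS le6l) ltn_add2l.
under eq_bigr => i _ do rewrite mulnS subnDA.
have -> : l - 4 = (l - 5).+1 by lia.
by apply: IH; lia.
Qed.
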